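(* Let $\Omega_0=(-\infty,-2)^3\subset\mathbb{R}^3$ and $\Omega=\Gamma\cdot\Omega_0$. If $\gamma\in\Gamma_{(2)}$ and $\gamma\Omega_0\cap\Omega_0\neq\emptyset$, then $\gamma$ is the identity. Consequently $\Omega$ is the disjoint union $\coprod_{\gamma\in\Gamma_{(2)}}\gamma\Omega_0$.
   Context: $\kappa(x,y,z)=x^2+y^2+z^2-xyz-2$. $\Gamma$ denotes the group of polynomial automorphisms of $\mathbb{C}^3$ generated by: all permutations of the coordinates $x,y,z$; the three sign changes $(x,y,z)\mapsto(x,-y,-z)$, $(x,y,z)\mapsto(-x,y,-z)$, $(x,y,z)\mapsto(-x,-y,z)$; and the quadratic reflection $(x,y,z)\mapsto(yz-x,y,z)$. Every element of $\Gamma$ preserves $\kappa$ and maps $\mathbb{R}^3$ to itself. $\Gamma_{(2)}$ denotes the subgroup of $\Gamma$ generated by the three sign changes and the three quadratic reflections $Q_x(x,y,z)=(yz-x,y,z)$, $Q_y(x,y,z)=(x,xz-y,z)$, $Q_z(x,y,z)=(x,y,xy-z)$; it is the kernel of the natural surjection $\Gamma\to\mathfrak{S}_3$ and has index $6$. *)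

From Stdlib Require Import Reals.
Open Scope R_scope.

Definition pt : Type := (R * R * R)%type.

Definition kappa (p : pt) : R :=
  let '(x, y, z) := p in x*x + y*y + z*z - x*y*z - 2.

Definition perm_xy (p : pt) : pt := let '(x, y, z) := p in (y, x, z).
Definition perm_yz (p : pt) : pt := let '(x, y, z) := p in (x, z, y).
Definition perm_xz (p : pt) : pt := let '(x, y, z) := p in (z, y, x).
Definition perm_cyc1 (p : pt) : pt := let '(x, y, z) := p in (y, z, x).
Definition perm_cyc2 (p : pt) : pt := let '(x, y, z) := p in (z, x, y).
Definition sign_x (p : pt) : pt := let '(x, y, z) := p in (x, -y, -z).
Definition sign_y (p : pt) : pt := let '(x, y, z) := p in (-x, y, -z).
Definition sign_z (p : pt) : pt := let '(x, y, z) := p in (-x, -y, z).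
Definition Qx (p : pt) : pt := let '(x, y, z) := p in (y*z - x, y, z).
Definition Qy (p : pt) : pt := let '(x, y, z) := p in (x, x*z - y, z).
Definition Qz (p : pt) : pt := let '(x, y, z) := p in (x, y, x*y - z).

Inductive gen2 : (pt -> pt) -> Prop :=
| g2_sx : gen2 sign_x | g2_sy : gen2 sign_y | g2_sz : gen2 sign_z
| g2_Qx : gen2 Qx | g2_Qy : gen2 Qy | g2_Qz : gen2 Qz.

(* Generating set of Gamma: all permutations, sign changes, and Qx
   (Qy, Qz are included too; they are conjugates of Qx by permutations). *)
Inductive genG : (pt -> pt) -> Prop :=
| gG_2 g : gen2 g -> genG g
| gG_xy : genG perm_xy | gG_yz : genG perm_yz | gG_xz : genG perm_xz
| gG_c1 : genG perm_cyc1 | gG_c2 : genG perm_cyc2.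

(* The group generated by a set of involutive generators (all generators
   above are involutions or permutations of finite order, so the generated
   group is the set of finite compositions of generators). *)
Inductive words (gen : (pt -> pt) -> Prop) : (pt -> pt) -> Prop :=
| w_id : words gen (fun p => p)
| w_comp g f : gen g -> words gen f -> words gen (fun p => g (f p)).

Definition Gamma : (pt -> pt) -> Prop := words genG.
Definition Gamma2 : (pt -> pt) -> Prop := words gen2.

Definition Omega0 (p : pt) : Prop :=
  let '(x, y, z) := p in x < -2 /\ y < -2 /\ z < -2.

Definition img (g : pt -> pt) (A : pt -> Prop) (p : pt) : Prop :=
  exists q, A q /\ p = g q.

Definition Omega (p : pt) : Prop := exists g, Gamma g /\ img g Omega0 p.

(* Every element of Gamma_(2) is a sign change composed with a reduced word in
   Qx, Qy, Qz, since sign changes commute with the Q's and all generators are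
   involutions.  Reduced words play ping-pong: Q_i maps Omega0 into the region
   D_i where xyz > 0, every coordinate has modulus > 2 and the i-th one has the
   largest modulus, and Q_j maps D_i into D_j for j <> i.  Sign changes preserve
   xyz, which is negative on Omega0, so a nonempty reduced word moves Omega0 off
   itself, and the only sign change meeting Omega0 is the identity.  The
   permutations normalize Gamma_(2) and preserve Omega0, which gives the orbit
   decomposition of Omega; disjointness follows by applying the first part to
   the quotient of two translates. *)

From Stdlib Require Import Reals Lra Psatz List.
Open Scope R_scope.

Lemma pt_eq (a b c a' b' c' : R) : a = a' -> b = b' -> c = c' -> (a, b, c) = (a', b', c').
Proof. intros; subst; reflexivity. Qed.

Section Words.

Variable gen : (pt -> pt) -> Prop.

Lemma words_comp f g : words gen f -> words gen g -> words gen (fun p => f (g p)).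
Proof. intros Hf Hg; induction Hf; [exact Hg | constructor; auto]. Qed.

Lemma words_mono (gen' : (pt -> pt) -> Prop) g :
  (forall h, gen h -> gen' h) -> words gen g -> words gen' g.
Proof. intros Hsub Hg; induction Hg; constructor; auto. Qed.

Lemma words_inv g :
  (forall h, gen h -> forall p, h (h p) = p) -> words gen g ->
  exists g', words gen g' /\ (forall p, g' (g p) = p) /\ (forall p, g (g' p) = p).
Proof.
  intros Hinvol Hg; induction Hg as [|h f Hh Hf IH].
  - exists (fun p => p); repeat split; constructor.
  - destruct IH as (f' & Hf' & Hl & Hr).
    exists (fun p => f' (h p)); repeat split.
    + apply words_comp; auto. repeat constructor; auto.
    + intros p. rewrite Hinvol; auto.
    + intros p. rewrite Hr; auto.
Qed.

Lemma words_conj (gen' : (pt -> pt) -> Prop) (s : pt -> pt) g :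
  (forall h, gen h -> exists h', gen' h' /\ forall p, s (h p) = h' (s p)) ->
  words gen g -> exists g', words gen' g' /\ forall p, s (g p) = g' (s p).
Proof.
  intros Hconj Hg; induction Hg as [|h f Hh Hf IH].
  - exists (fun p => p); split; [constructor | reflexivity].
  - destruct IH as (f' & Hf' & Ef). destruct (Hconj h Hh) as (h' & Hh' & Eh).
    exists (fun p => h' (f' p)); split; [constructor; auto|].
    intros p; rewrite Eh, Ef; reflexivity.
Qed.

End Words.

Inductive axis := AX | AY | AZ.

Definition refl (i : axis) : pt -> pt := match i with AX => Qx | AY => Qy | AZ => Qz end.

Definition refl_word (w : list axis) (p : pt) : pt := fold_right refl p w.

Fixpoint reduced (w : list axis) : Prop :=
  match w with
  | i :: ((j :: _) as w') => i <> j /\ reduced w'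
  | _ => True
  end.

Inductive sign := S0 | SX | SY | SZ.

Definition sign_act (s : sign) : pt -> pt :=
  match s with S0 => fun p => p | SX => sign_x | SY => sign_y | SZ => sign_z end.

Definition sign_mul (s t : sign) : sign :=
  match s, t with
  | S0, u | u, S0 => u
  | SX, SX | SY, SY | SZ, SZ => S0
  | SX, SY | SY, SX => SZ
  | SX, SZ | SZ, SX => SY
  | SY, SZ | SZ, SY => SX
  end.

Lemma sign_act_mul s t p : sign_act s (sign_act t p) = sign_act (sign_mul s t) p.
Proof. destruct s, t, p as [[x y] z]; simpl; apply pt_eq; ring. Qed.

Lemma refl_sign_act i s p : refl i (sign_act s p) = sign_act s (refl i p).
Proof. destruct i, s, p as [[x y] z]; simpl; apply pt_eq; ring. Qed.

Lemma reflK i p : refl i (refl i p) = p.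
Proof. destruct i, p as [[x y] z]; simpl; apply pt_eq; ring. Qed.

Lemma axis_eq_dec (i j : axis) : {i = j} + {i <> j}.
Proof. decide equality. Qed.

Lemma reduced_refl_word i w : reduced w ->
  exists w', reduced w' /\ forall p, refl i (refl_word w p) = refl_word w' p.
Proof.
  intros Hw. destruct w as [|j w].
  - exists (i :: nil); split; simpl; auto.
  - destruct (axis_eq_dec i j) as [<-|Hij].
    + exists w; split.
      * destruct w; simpl in *; tauto.
      * intros p; apply reflK.
    + exists (i :: j :: w); split; simpl; auto.
Qed.

Lemma Gamma2_normal_form g : Gamma2 g ->
  exists s w, reduced w /\ forall p, g p = sign_act s (refl_word w p).
Proof.
  intros Hg; induction Hg as [|h f Hh Hf IH].
  - exists S0, nil; simpl; auto.
  - destruct IH as (s & w & Hw & Ef).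
    assert (Hsign : forall t, (forall p, h p = sign_act t p) ->
      exists s' w', reduced w' /\ forall p, h (f p) = sign_act s' (refl_word w' p)).
    { intros t Ht. exists (sign_mul t s), w; split; auto.
      intros p; rewrite Ht, Ef; apply sign_act_mul. }
    assert (Hrefl : forall i, (forall p, h p = refl i p) ->
      exists s' w', reduced w' /\ forall p, h (f p) = sign_act s' (refl_word w' p)).
    { intros i Hi. destruct (reduced_refl_word i w Hw) as (w' & Hw' & Ew).
      exists s, w'; split; auto.
      intros p; rewrite Hi, Ef, refl_sign_act, Ew; reflexivity. }
    destruct Hh;
      [apply (Hsign SX) | apply (Hsign SY) | apply (Hsign SZ)
      | apply (Hrefl AX) | apply (Hrefl AY) | apply (Hrefl AZ)]; reflexivity.
Qed.

Lemma sq_gt_4 a : a * a > 4 -> 2 < a \/ a < -2.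
Proof. intros. destruct (Rle_lt_dec a 0); [right | left]; nra. Qed.

Lemma reflect_grows_pos a b c : 2 < a -> 2 < b -> 2 < c -> a < b ->
  b < b * c - a /\ c < b * c - a.
Proof. intros; split; nra. Qed.

Lemma reflect_grows a b c : a * b * c > 0 -> a * a > 4 -> b * b > 4 -> c * c > 4 ->
  b * b > a * a ->
  (b * c - a) * b * c > 0 /\ (b * c - a) * (b * c - a) > b * b /\
  (b * c - a) * (b * c - a) > c * c.
Proof.
  intros Habc Ha Hb Hc Hab.
  destruct (sq_gt_4 a Ha), (sq_gt_4 b Hb), (sq_gt_4 c Hc);
    try (exfalso; assert (a * b > 4) by nra; nra);
    try (exfalso; assert (a * b < -4) by nra; nra).
  - destruct (reflect_grows_pos a b c); [lra | lra | lra | nra |].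
    repeat split; nra.
  - destruct (reflect_grows_pos a (-b) (-c)); [lra | lra | lra | nra |].
    repeat split; nra.
  - destruct (reflect_grows_pos (-a) b (-c)); [lra | lra | lra | nra |].
    repeat split; nra.
  - destruct (reflect_grows_pos (-a) (-b) c); [lra | lra | lra | nra |].
    repeat split; nra.
Qed.

Definition dominant (i : axis) (p : pt) : Prop :=
  let '(x, y, z) := p in
  x * y * z > 0 /\ x * x > 4 /\ y * y > 4 /\ z * z > 4 /\
  match i with
  | AX => x * x > y * y /\ x * x > z * z
  | AY => y * y > x * x /\ y * y > z * z
  | AZ => z * z > x * x /\ z * z > y * y
  end.

Lemma refl_dominant i j p : dominant i p -> j <> i -> dominant j (refl j p).
Proof.
  destruct p as [[x y] z]; simpl.
  intros (Hxyz & Hx & Hy & Hz & Hi) Hji.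
  destruct i, j; try congruence; simpl; destruct Hi.
  - destruct (reflect_grows y x z); try lra; repeat split; nra.
  - destruct (reflect_grows z x y); try lra; repeat split; nra.
  - destruct (reflect_grows x y z); try lra; repeat split; nra.
  - destruct (reflect_grows z y x); try lra; repeat split; nra.
  - destruct (reflect_grows x z y); try lra; repeat split; nra.
  - destruct (reflect_grows y z x); try lra; repeat split; nra.
Qed.

Lemma refl_Omega0_dominant i q : Omega0 q -> dominant i (refl i q).
Proof.
  destruct q as [[x y] z]; simpl. intros (Hx & Hy & Hz).
  assert (x * y > 4) by nra. assert (y * z > 4) by nra. assert (x * z > 4) by nra.
  assert (y * z > -2 * y /\ y * z > -2 * z /\ x * z > -2 * x /\
          x * z > -2 * z /\ x * y > -2 * x /\ x * y > -2 * y) by (repeat split; nra).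
  destruct i; simpl.
  - assert (y * z - x > 6) by lra.
    replace ((y * z - x) * y * z) with ((y * z - x) * (y * z)) by ring.
    repeat split; nra.
  - assert (x * z - y > 6) by lra.
    replace (x * (x * z - y) * z) with ((x * z - y) * (x * z)) by ring.
    repeat split; nra.
  - assert (x * y - z > 6) by lra.
    replace (x * y * (x * y - z)) with ((x * y - z) * (x * y)) by ring.
    repeat split; nra.
Qed.

Lemma reduced_word_dominant i w q : Omega0 q -> reduced (i :: w) ->
  dominant i (refl_word (i :: w) q).
Proof.
  intros Hq. revert i; induction w as [|j w IH]; intros i Hw.
  - apply refl_Omega0_dominant; auto.
  - destruct Hw as [Hij Hw].
    apply refl_dominant with j; auto.
Qed.

Definition coord_prod (p : pt) : R := let '(x, y, z) := p in x * y * z.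

Lemma coord_prod_sign_act s p : coord_prod (sign_act s p) = coord_prod p.
Proof. destruct s, p as [[x y] z]; simpl; ring. Qed.

Lemma coord_prod_Omega0 p : Omega0 p -> coord_prod p < 0.
Proof. destruct p as [[x y] z]; simpl. intros (Hx & Hy & Hz). assert (x * y > 4) by nra. nra. Qed.

Lemma Gamma2_meets_Omega0_id g : Gamma2 g ->
  (exists p, img g Omega0 p /\ Omega0 p) -> forall p, g p = p.
Proof.
  intros Hg (p & (q & Hq & ->) & Hgq).
  destruct (Gamma2_normal_form g Hg) as (s & w & Hw & Eg).
  rewrite Eg in Hgq. destruct w as [|i w].
  - destruct s; [intros; apply Eg | exfalso ..];
      destruct q as [[x y] z]; simpl in Hgq, Hq; lra.
  - exfalso. apply coord_prod_Omega0 in Hgq.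
    rewrite coord_prod_sign_act in Hgq.
    pose proof (reduced_word_dominant i w q Hq Hw) as Hdom.
    destruct (refl_word (i :: w) q) as [[x y] z]; simpl in Hdom, Hgq; lra.
Qed.

Inductive perm_gen : (pt -> pt) -> Prop :=
| pg_xy : perm_gen perm_xy | pg_yz : perm_gen perm_yz | pg_xz : perm_gen perm_xz
| pg_c1 : perm_gen perm_cyc1 | pg_c2 : perm_gen perm_cyc2.

Lemma genG_split g : genG g -> gen2 g \/ perm_gen g.
Proof. destruct 1; [left; auto | right; constructor ..]. Qed.

Local Ltac conj_witness h :=
  exists h; split; [constructor | intros [[x y] z]; simpl; apply pt_eq; ring].

Lemma perm_gen_conj_gen2 s : perm_gen s -> forall h, gen2 h ->
  exists h', gen2 h' /\ forall p, s (h p) = h' (s p).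
Proof.
  intros Hs h Hh.
  destruct Hs, Hh;
    first [ conj_witness sign_x | conj_witness sign_y | conj_witness sign_z
          | conj_witness Qx | conj_witness Qy | conj_witness Qz ].
Qed.

Lemma perm_words_Omega0 s q : words perm_gen s -> Omega0 q -> Omega0 (s q).
Proof.
  intros Hs Hq; induction Hs as [|h f Hh Hf IH]; auto.
  destruct Hh; destruct (f q) as [[x y] z]; simpl in *; tauto.
Qed.

Lemma Gamma_factor g : Gamma g ->
  exists h s, Gamma2 h /\ words perm_gen s /\ forall p, g p = h (s p).
Proof.
  intros Hg; induction Hg as [|k f Hk Hf IH].
  - exists (fun p => p), (fun p => p); repeat split; constructor.
  - destruct IH as (h & s & Hh & Hs & Ef).
    destruct (genG_split k Hk) as [Hk2 | Hkp].
    + exists (fun p => k (h p)), s; repeat split; [constructor; auto | auto |].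
      intros p; rewrite Ef; reflexivity.
    + destruct (words_conj gen2 gen2 k h (perm_gen_conj_gen2 k Hkp) Hh) as (h' & Hh' & Eh).
      exists h', (fun p => k (s p)); repeat split; [auto | constructor; auto |].
      intros p; rewrite Ef, Eh; reflexivity.
Qed.

Lemma Omega_Gamma2_orbit p : Omega p <-> exists g, Gamma2 g /\ img g Omega0 p.
Proof.
  split.
  - intros (g & Hg & q & Hq & ->). destruct (Gamma_factor g Hg) as (h & s & Hh & Hs & Eg).
    exists h; split; auto. exists (s q); split; auto using perm_words_Omega0.
  - intros (g & Hg & Hp). exists g; split; auto.
    apply (words_mono gen2); auto. constructor; auto.
Qed.

Lemma gen2_invol h : gen2 h -> forall p, h (h p) = p.
Proof. intros Hh [[x y] z]; destruct Hh; simpl; apply pt_eq; ring. Qed.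

Lemma Gamma2_translates_disjoint g1 g2 : Gamma2 g1 -> Gamma2 g2 ->
  (exists p, img g1 Omega0 p /\ img g2 Omega0 p) -> forall p, g1 p = g2 p.
Proof.
  intros H1 H2 (p & (q1 & Hq1 & E1) & (q2 & Hq2 & E2)) p0.
  destruct (words_inv gen2 g2 gen2_invol H2) as (g2' & H2' & Hl & Hr).
  assert (Hid : forall t, g2' (g1 t) = t).
  { apply Gamma2_meets_Omega0_id; [apply words_comp; auto|].
    exists q2; split; auto. exists q1; split; auto.
    rewrite <- E1, E2, Hl; reflexivity. }
  rewrite <- (Hr (g1 p0)), Hid; reflexivity.
Qed.

Theorem mainTheorem8 :
  (forall g : pt -> pt, Gamma2 g ->
     (exists p, img g Omega0 p /\ Omega0 p) -> forall p, g p = p)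
  /\
  (forall p, Omega p <-> exists g, Gamma2 g /\ img g Omega0 p)
  /\
  (forall g1 g2 : pt -> pt, Gamma2 g1 -> Gamma2 g2 ->
     (exists p, img g1 Omega0 p /\ img g2 Omega0 p) ->
     forall p, g1 p = g2 p).
Proof.
  split; [exact Gamma2_meets_Omega0_id|].
  split; [exact Omega_Gamma2_orbit | exact Gamma2_translates_disjoint].
Qed.
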